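(* Let $\mathcal{H}_A$ and $\mathcal{H}_B$ be complex Hilbert spaces, let $\hat A$ be a bounded Hermitian operator on $\mathcal{H}_A\otimes\mathcal{H}_B$, and let $g_0$, $|a_0,b_0\rangle$ be a solution of the separability eigenvalue equations of $\hat A$. Then: (1) For any orthonormal bases $\{|a_k\rangle\}_{k}$ of $\mathcal{H}_A$ and $\{|b_l\rangle\}_{l}$ of $\mathcal{H}_B$ which contain $|a_0\rangle$ and $|b_0\rangle$ respectively (with index $0$), one has $\hat A|a_0,b_0\rangle=g_0|a_0,b_0\rangle+\sum_{k\neq0,\,l\neq0}\psi_{k,l}|a_k,b_l\rangle$ for some coefficients $\psi_{k,l}\in\mathbb{C}$; that is, the coefficient of $|a_0,b_0\rangle$ is $g_0$ and the coefficients of $|a_k,b_0\rangle$ ($k\neq0$) and $|a_0,b_l\rangle$ ($l\neq0$) vanish. (2) If $g_1\neq g_0$ and $g_1$, $|a_1,b_0\rangle$ is another solution, then $\langle a_0|a_1\rangle=0$; likewise, if $g_1\neq g_0$ and $g_1$, $|a_0,b_1\rangle$ is another solution, then $\langle b_0|b_1\rangle=0$. (3) If $g_1\neq g_0$ and $g_1$, $|a_1,b_1\rangle$ is another solution, then $|a_0,b_0\rangle$ and $|a_1,b_1\rangle$ are linearly independent.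
   Context: Notation: $|a,b\rangle=|a\rangle\otimes|b\rangle$. For $|a\rangle\in\mathcal{H}_A$, $\hat A_a=\langle a|\hat A|a\rangle$ denotes the operator on $\mathcal{H}_B$ with $\langle b'|\hat A_a|b\rangle=\langle a,b'|\hat A|a,b\rangle$; for $|b\rangle\in\mathcal{H}_B$, $\hat A_b=\langle b|\hat A|b\rangle$ denotes the operator on $\mathcal{H}_A$ with $\langle a'|\hat A_b|a\rangle=\langle a',b|\hat A|a,b\rangle$. A solution of the separability eigenvalue equations of $\hat A$ is a real number $g$ together with unit vectors $|a\rangle\in\mathcal{H}_A$, $|b\rangle\in\mathcal{H}_B$ such that $\hat A_b|a\rangle=g|a\rangle$ and $\hat A_a|b\rangle=g|b\rangle$; it is written $g,|a,b\rangle$. *)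

From HB Require Import structures.
From mathcomp Require Import all_boot all_order all_algebra.
From mathcomp Require Import complex.
From mathcomp Require Import reals.
Set Implicit Arguments. Unset Strict Implicit. Unset Printing Implicit Defensive.
Import Order.TTheory GRing.Theory Num.Theory.
Local Open Scope ring_scope.
Local Open Scope complex_scope.

Section Hilbert.
Variable R : realType.
Local Notation C := R[i].

(* Inner product, physics convention: <x|y> is antilinear in x, linear in y. *)
Definition is_inner_product (V : lmodType C) (ip : V -> V -> C) : Prop :=
  [/\ (forall x y z, ip x (y + z) = ip x y + ip x z),
      (forall x (c : C) y, ip x (c *: y) = c * ip x y),
      (forall x y, ip y x = (ip x y)^*),
      (forall x, 0 <= ip x x) &
      (forall x, ip x x = 0 -> x = 0)].

Definition dist2 (V : lmodType C) (ip : V -> V -> C) (x y : V) : C :=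
  ip (x - y) (x - y).

Definition is_complete (V : lmodType C) (ip : V -> V -> C) : Prop :=
  forall u : nat -> V,
    (forall eps : R, 0 < eps -> exists N : nat, forall m n : nat,
        (N <= m)%N -> (N <= n)%N -> dist2 ip (u m) (u n) < eps%:C) ->
    exists l : V, forall eps : R, 0 < eps -> exists N : nat, forall n : nat,
        (N <= n)%N -> dist2 ip (u n) l < eps%:C.

Definition is_hilbert (V : lmodType C) (ip : V -> V -> C) : Prop :=
  is_inner_product ip /\ is_complete ip.

(* This characterizes the
   Hilbert-space tensor product up to unitary isomorphism. *)
Definition is_hilbert_tensor (HA HB H : lmodType C)
    (ipA : HA -> HA -> C) (ipB : HB -> HB -> C) (ipH : H -> H -> C)
    (tens : HA -> HB -> H) : Prop :=
  [/\ (forall (c : C) a a' b, tens (c *: a + a') b = c *: tens a b + tens a' b),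
      (forall (c : C) a b b', tens a (c *: b + b') = c *: tens a b + tens a b'),
      (forall a a' b b', ipH (tens a b) (tens a' b') = ipA a a' * ipB b b') &
      (forall (x : H) (eps : R), 0 < eps -> exists s : seq (C * HA * HB),
          dist2 ipH x (\sum_(t <- s) t.1.1 *: tens t.1.2 t.2) < eps%:C)].

Definition is_bounded_hermitian (H : lmodType C) (ip : H -> H -> C)
    (A : H -> H) : Prop :=
  [/\ (forall (c : C) x y, A (c *: x + y) = c *: A x + A y),
      (exists M : R, forall x, ip (A x) (A x) <= M%:C * ip x x) &
      (forall x y, ip (A x) y = ip x (A y))].

Definition is_onb (V : lmodType C) (ip : V -> V -> C) (I : eqType)
    (e : I -> V) : Prop :=
  (forall k l, ip (e k) (e l) = if k == l then 1 else 0) /\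
  (forall x, (forall k, ip (e k) x = 0) -> x = 0).

(* g, |a,b> solves the separability eigenvalue equations of A:
   |a>, |b> unit vectors, A_b|a> = g|a> and A_a|b> = g|b>, where the partial
   operators are given by their matrix elements
   <a'|A_b|a> = <a',b|A|a,b> and <b'|A_a|b> = <a,b'|A|a,b>; the equation
   A_b|a> = g|a> is written out as equality of all matrix elements
   <a'|A_b|a> = g <a'|a>. *)
Definition sep_eig (HA HB H : lmodType C)
    (ipA : HA -> HA -> C) (ipB : HB -> HB -> C) (ipH : H -> H -> C)
    (tens : HA -> HB -> H) (A : H -> H) (g : R) (a : HA) (b : HB) : Prop :=
  [/\ ipA a a = 1, ipB b b = 1,
      (forall a' : HA, ipH (tens a' b) (A (tens a b)) = g%:C * ipA a' a) &
      (forall b' : HB, ipH (tens a b') (A (tens a b)) = g%:C * ipB b' b)].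

End Hilbert.

From HB Require Import structures.
From mathcomp Require Import all_boot all_order all_algebra.
From mathcomp Require Import complex.
From mathcomp Require Import reals.
Set Implicit Arguments. Unset Strict Implicit. Unset Printing Implicit Defensive.
Import Order.TTheory GRing.Theory Num.Theory.
Local Open Scope ring_scope.
Local Open Scope complex_scope.

(* Taking a' = a in the separability eigenvalue equation shows that g is the
   expectation value <a,b|A|a,b>.  Hermiticity makes the matrix element
   <a0,b0|A|a1,b0> equal to both g1 <a0|a1> and g0 <a0|a1>, which forces
   <a0|a1> = 0 when g0 <> g1.  Finally, if |a1,b1> were a multiple of the unit
   vector |a0,b0>, the multiplier would have modulus one and both vectors would
   have the same expectation value g0 = g1. *)

Lemma conjcM (R : rcfType) (x y : R[i]) : conjc (x * y) = conjc x * conjc y.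
Proof. exact: rmorphM. Qed.

Section InnerProductOperator.
Variables (R : realType) (V : lmodType R[i]) (ip : V -> V -> R[i]) (A : V -> V).
Hypothesis ip_inner : is_inner_product ip.
Hypothesis A_linear : forall (c : R[i]) x y, A (c *: x + y) = c *: A x + A y.
Hypothesis A_hermitian : forall x y, ip (A x) y = ip x (A y).

Lemma ipr0 x : ip x 0 = 0.
Proof.
case: ip_inner => ipD _ _ _ _.
by apply: (addrI (ip x 0)); rewrite -ipD !addr0.
Qed.

Lemma ipZl (c : R[i]) x y : ip (c *: x) y = conjc c * ip x y.
Proof. by case: ip_inner => _ ipZ ipC _ _; rewrite ipC ipZ conjcM -ipC. Qed.

Lemma scale_unit_eq0 (c : R[i]) x : ip x x = 1 -> c *: x = 0 -> c = 0.
Proof.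
case: ip_inner => _ ipZ _ _ _ x1 cx0.
by have := ipZ x c x; rewrite cx0 ipr0 x1 mulr1.
Qed.

Lemma hermitian_ip_conj x y : ip x (A y) = conjc (ip y (A x)).
Proof. by case: ip_inner => _ _ ipC _ _; rewrite -A_hermitian ipC. Qed.

Lemma linearZ_op (c : R[i]) x : A (c *: x) = c *: A x.
Proof.
have A0 : A 0 = 0.
  have := A_linear 1 0 0; rewrite scaler0 add0r scale1r => A00.
  by apply: (addrI (A 0)); rewrite addr0 -A00.
by rewrite -[c *: x]addr0 A_linear A0 addr0.
Qed.

Lemma expectation_scale (c : R[i]) x :
  ip (c *: x) (A (c *: x)) = conjc c * c * ip x (A x).
Proof.
case: ip_inner => _ ipZ _ _ _.
by rewrite linearZ_op ipZl ipZ mulrA.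
Qed.

Lemma expectation_collinear_unit (c : R[i]) x :
  ip x x = 1 -> ip (c *: x) (c *: x) = 1 ->
  ip (c *: x) (A (c *: x)) = ip x (A x).
Proof.
case: ip_inner => _ ipZ _ _ _ x1 cx1.
have cc1 : conjc c * c = 1 by rewrite -cx1 ipZl ipZ x1 mulr1.
by rewrite expectation_scale cc1 mul1r.
Qed.

Lemma lin_indep_of_expectation_neq (c d : R[i]) x y :
  ip x x = 1 -> ip y y = 1 -> ip x (A x) != ip y (A y) ->
  c *: x + d *: y = 0 -> c = 0 /\ d = 0.
Proof.
move=> x1 y1 neq_xy cxdy0.
have d0 : d = 0.
  apply/eqP; apply: contraNT neq_xy => dn0.
  have y_eq : y = (- c / d) *: x.
    apply: (scalerI dn0); rewrite scalerA mulrCA divff // mulr1 scaleNr.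
    by apply/eqP; rewrite -addr_eq0 addrC cxdy0.
  by rewrite y_eq expectation_collinear_unit // -y_eq.
split=> //; apply: (scale_unit_eq0 x1).
by move: cxdy0; rewrite d0 scale0r addr0.
Qed.

End InnerProductOperator.

Lemma realC_mulIf (R : realType) (g0 g1 : R) (z : R[i]) :
  g1 != g0 -> g1%:C * z = g0%:C * z -> z = 0.
Proof.
move=> neq_g Egz; apply/eqP; apply: contraNT neq_g => z0.
by apply/eqP/complexI; apply: (mulIf z0).
Qed.

Section SeparabilityEigenvalues.
Variables (R : realType) (HA HB H : lmodType R[i]).
Variables (ipA : HA -> HA -> R[i]) (ipB : HB -> HB -> R[i]) (ipH : H -> H -> R[i]).
Variables (tens : HA -> HB -> H) (A : H -> H).
Hypothesis ipA_inner : is_inner_product ipA.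
Hypothesis ipB_inner : is_inner_product ipB.
Hypothesis ipH_inner : is_inner_product ipH.
Hypothesis ip_tens : forall a a' b b',
  ipH (tens a b) (tens a' b') = ipA a a' * ipB b b'.
Hypothesis A_linear : forall (c : R[i]) x y, A (c *: x + y) = c *: A x + A y.
Hypothesis A_hermitian : forall x y, ipH (A x) y = ipH x (A y).

Local Notation sep_eig := (sep_eig ipA ipB ipH tens A).

Lemma sep_eig_expectation g a b :
  sep_eig g a b -> ipH (tens a b) (A (tens a b)) = g%:C.
Proof. by case=> a1 _ Ea _; rewrite Ea a1 mulr1. Qed.

Lemma sep_eig_unit g a b : sep_eig g a b -> ipH (tens a b) (tens a b) = 1.
Proof. by case=> a1 b1 _ _; rewrite ip_tens a1 b1 mulr1. Qed.

Lemma sep_eig_orthogonal_A g0 g1 a0 a1 b :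
  g1 != g0 -> sep_eig g0 a0 b -> sep_eig g1 a1 b -> ipA a0 a1 = 0.
Proof.
move=> neq_g [_ _ E0 _] [_ _ E1 _]; apply: (realC_mulIf neq_g).
case: ipA_inner => _ _ ipAC _ _.
by rewrite -E1 (hermitian_ip_conj ipH_inner A_hermitian) E0 conjcM conjc_real -ipAC.
Qed.

Lemma sep_eig_orthogonal_B g0 g1 a b0 b1 :
  g1 != g0 -> sep_eig g0 a b0 -> sep_eig g1 a b1 -> ipB b0 b1 = 0.
Proof.
move=> neq_g [_ _ _ E0] [_ _ _ E1]; apply: (realC_mulIf neq_g).
case: ipB_inner => _ _ ipBC _ _.
by rewrite -E1 (hermitian_ip_conj ipH_inner A_hermitian) E0 conjcM conjc_real -ipBC.
Qed.

Lemma sep_eig_lin_indep g0 g1 a0 b0 a1 b1 (c d : R[i]) :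
  g1 != g0 -> sep_eig g0 a0 b0 -> sep_eig g1 a1 b1 ->
  c *: tens a0 b0 + d *: tens a1 b1 = 0 -> c = 0 /\ d = 0.
Proof.
move=> neq_g sol0 sol1.
apply: (lin_indep_of_expectation_neq ipH_inner A_linear);
  rewrite ?(sep_eig_unit sol0) ?(sep_eig_unit sol1) //.
rewrite (sep_eig_expectation sol0) (sep_eig_expectation sol1).
by apply: contra neq_g => /eqP/complexI ->.
Qed.

End SeparabilityEigenvalues.

Theorem proposition1 (R : realType) (HA HB H : lmodType R[i])
    (ipA : HA -> HA -> R[i]) (ipB : HB -> HB -> R[i]) (ipH : H -> H -> R[i])
    (tens : HA -> HB -> H) (A : H -> H) (g0 : R) (a0 : HA) (b0 : HB) :
  is_hilbert ipA -> is_hilbert ipB -> is_hilbert ipH ->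
  is_hilbert_tensor ipA ipB ipH tens ->
  is_bounded_hermitian ipH A ->
  sep_eig ipA ipB ipH tens A g0 a0 b0 ->
  (* (1) coefficients of A|a0,b0> in the product basis |a_k,b_l> *)
  (forall (I J : eqType) (k0 : I) (l0 : J) (ea : I -> HA) (eb : J -> HB),
      is_onb ipA ea -> is_onb ipB eb -> ea k0 = a0 -> eb l0 = b0 ->
      [/\ ipH (tens a0 b0) (A (tens a0 b0)) = g0%:C,
          (forall k, k != k0 -> ipH (tens (ea k) b0) (A (tens a0 b0)) = 0) &
          (forall l, l != l0 -> ipH (tens a0 (eb l)) (A (tens a0 b0)) = 0)])
  /\
  (* (2) *)
  (forall (g1 : R) (a1 : HA), g1 != g0 ->
      sep_eig ipA ipB ipH tens A g1 a1 b0 -> ipA a0 a1 = 0)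
  /\
  (forall (g1 : R) (b1 : HB), g1 != g0 ->
      sep_eig ipA ipB ipH tens A g1 a0 b1 -> ipB b0 b1 = 0)
  /\
  (* (3) linear independence *)
  (forall (g1 : R) (a1 : HA) (b1 : HB), g1 != g0 ->
      sep_eig ipA ipB ipH tens A g1 a1 b1 ->
      forall c d : R[i], c *: tens a0 b0 + d *: tens a1 b1 = 0 -> c = 0 /\ d = 0).
Proof.
move=> [ipA_inner _] [ipB_inner _] [ipH_inner _] [_ _ ip_tens _]
  [A_linear _ A_hermitian] sol0.
split; last split; last split.
- move=> I J k0 l0 ea eb [ea_ortho _] [eb_ortho _] ea_k0 eb_l0.
  have [_ _ Ea Eb] := sol0.
  split; first exact: sep_eig_expectation sol0.
  + by move=> k /negbTE k_k0; rewrite Ea -ea_k0 ea_ortho k_k0 mulr0.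
  + by move=> l /negbTE l_l0; rewrite Eb -eb_l0 eb_ortho l_l0 mulr0.
- move=> g1 a1 neq_g sol1.
  exact (sep_eig_orthogonal_A ipA_inner ipH_inner A_hermitian neq_g sol0 sol1).
- move=> g1 b1 neq_g sol1.
  exact (sep_eig_orthogonal_B ipB_inner ipH_inner A_hermitian neq_g sol0 sol1).
- move=> g1 a1 b1 neq_g sol1 c d.
  exact (sep_eig_lin_indep ipH_inner ip_tens A_linear neq_g sol0 sol1).
Qed.
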